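(* Let $L=\{0,1,\dots,m\}^n$ ordered componentwise with bottom $\bot=(0,\dots,0)$, and let $f_1,\dots,f_n:L\to L$ be monotone, inflationary, and such that each $f_i$ is $i$-local. Fix integers $T\ge 0$ and $\tau\ge 1$. Consider an execution $G_0=\bot,G_1,G_2,\dots$ in which at each round $t$ a scheduler chooses $S_t\subseteq\{1,\dots,n\}$, and for each $i\in S_t$ process $i$ uses a view $\widehat G^{(i)}_t\in L$ satisfying bounded staleness with parameter $T$; the next state is given coordinatewise by $G_{t+1}[i]=f_i(\widehat G^{(i)}_t)[i]$ for $i\in S_t$ and $G_{t+1}[j]=G_t[j]$ for $j\notin S_t$. Assume the scheduler is strongly fair with parameter $\tau$. Then there exists $U$ with $G_t=G^*$ for all $t\ge U$, and $G^*$ is the least common fixed point of $\{f_1,\dots,f_n\}$.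
   Context: A function $f_i:L\to L$ is $i$-local if $f_i(G)[j]=G[j]$ for all $G\in L$ and all $j\neq i$. Bounded staleness with parameter $T$: for every round $t$ and $i\in S_t$, $\widehat G^{(i)}_t[i]=G_t[i]$, and for each $j\neq i$, $\widehat G^{(i)}_t[j]=G_s[j]$ for some round $s$ with $\max(0,t-T)\le s\le t$. Strong fairness with parameter $\tau$: every index $i$ belongs to $S_t$ for at least one $t$ in every window of $\tau$ consecutive rounds. A function is inflationary if $f(G)\ge G$ for all $G$, monotone if $G\le H\Rightarrow f(G)\le f(H)$. The least common fixed point is the least $G\in L$ with $f_i(G)=G$ for all $i$. *)

From mathcomp Require Import all_boot.
Set Implicit Arguments. Unset Strict Implicit. Unset Printing Implicit Defensive.

(* The lattice L = {0,...,m}^n; coordinates indexed by 'I_n (0-based version of 1..n). *)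
Definition lat (n m : nat) := {ffun 'I_n -> 'I_m.+1}.

Definition lat_le (n m : nat) (G H : lat n m) : Prop :=
  forall i : 'I_n, (nat_of_ord (G i) <= nat_of_ord (H i))%N.

Definition lat_bot (n m : nat) : lat n m := [ffun _ => ord0].

Definition monotone_fun (n m : nat) (f : lat n m -> lat n m) : Prop :=
  forall G H, lat_le G H -> lat_le (f G) (f H).

Definition inflationary (n m : nat) (f : lat n m -> lat n m) : Prop :=
  forall G, lat_le G (f G).

Definition local (n m : nat) (i : 'I_n) (f : lat n m -> lat n m) : Prop :=
  forall G (j : 'I_n), j != i -> f G j = G j.

Definition least_common_fixed_point (n m : nat) (f : 'I_n -> lat n m -> lat n m)
  (G : lat n m) : Prop :=
  (forall i, f i G = G) /\ (forall H, (forall i, f i H = H) -> lat_le G H).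

(* Bounded staleness with parameter T (t - T is truncated, i.e. max(0, t-T)). *)
Definition bounded_staleness (n m : nat) (T : nat) (G : nat -> lat n m)
  (S : nat -> {set 'I_n}) (view : nat -> 'I_n -> lat n m) : Prop :=
  forall t (i : 'I_n), i \in S t ->
    view t i i = G t i /\
    forall j : 'I_n, j != i ->
      exists s, (t - T <= s)%N /\ (s <= t)%N /\ view t i j = G s j.

Definition strongly_fair (n : nat) (tau : nat) (S : nat -> {set 'I_n}) : Prop :=
  forall (i : 'I_n) (t0 : nat), exists t, (t0 <= t)%N /\ (t < t0 + tau)%N /\ i \in S t.

Definition execution_step (n m : nat) (f : 'I_n -> lat n m -> lat n m)
  (G : nat -> lat n m) (S : nat -> {set 'I_n}) (view : nat -> 'I_n -> lat n m) : Prop :=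
  forall t (i : 'I_n),
    G t.+1 i = if i \in S t then f i (view t i) i else G t i.

(** The states of the execution increase along the componentwise order: an
    update reads its own coordinate fresh and [f_i] is inflationary.  Since [L]
    is finite, the states stabilise at some [G_U].  After [T] more rounds every
    view equals [G_U], and fairness makes each process update once more, which
    forces [f_i (G_U) = G_U].  Conversely, by induction, monotonicity keeps every
    state (and hence every stale view) below any common fixed point. *)
From Stdlib Require Import Classical.
From mathcomp Require Import all_boot zify.

Set Implicit Arguments.
Unset Strict Implicit.
Unset Printing Implicit Defensive.

Lemma nondecreasing_bounded_eventually_constant (p : nat -> nat) (B : nat) :
  {homo p : s t / s <= t} -> (forall t, p t <= B) ->
  exists U, forall t, U <= t -> p t = p U.
Proof.
(* Induction on the gap [B - p 0]: either [p] never exceeds [p 0], or it does at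
   some [t0] and the shifted sequence has a smaller gap. *)
move: {2}(B - p 0) (leqnn (B - p 0)) => k.
elim: k p => [|k IHk] p gap p_mono p_le.
  by exists 0 => t _; have := p_le t; have := p_mono 0 t (leq0n t); lia.
case: (classic (exists t0, p 0 < p t0)) => [[t0 lt_p0]|p_const]; last first.
  exists 0 => t _; have := p_mono 0 t (leq0n t).
  have : ~ p 0 < p t by move=> lt_p0; apply: p_const; exists t.
  lia.
have gap' : B - p (t0 + 0) <= k by rewrite addn0; have := p_le t0; lia.
have mono' : {homo (fun t => p (t0 + t)) : s t / s <= t}.
  by move=> s t le_st; apply: p_mono; rewrite leq_add2l.
have [U stable] := IHk _ gap' mono' (fun t => p_le _).
exists (t0 + U) => t le_Ut; have := stable (t - t0); rewrite subnKC; lia.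
Qed.

Section Lattice.
Variables n m : nat.

Lemma lat_le_refl : forall G : lat n m, lat_le G G.
Proof. by move=> G i. Qed.

Lemma lat_le_trans : forall H G K : lat n m, lat_le G H -> lat_le H K -> lat_le G K.
Proof. by move=> H G K le_GH le_HK i; apply: leq_trans (le_GH i) (le_HK i). Qed.

Definition lat_rank (G : lat n m) : nat := \sum_i G i.

Lemma lat_rank_le G H : lat_le G H -> lat_rank G <= lat_rank H.
Proof. by move=> le_GH; apply: leq_sum => i _. Qed.

Lemma lat_rank_bound G : lat_rank G <= \sum_(i < n) m.
Proof. by apply: leq_sum => i _; rewrite -ltnS. Qed.

Lemma lat_le_rank_eq G H : lat_le G H -> lat_rank H <= lat_rank G -> G = H.
Proof.
move=> le_GH; have le_rank := leqif_sum (fun i (_ : true) => leqif_eq (le_GH i)).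
rewrite (geq_leqif le_rank) => /forall_inP eq_GH.
by apply/ffunP => i; apply/val_inj/eqP/eq_GH.
Qed.

End Lattice.

Section Execution.
Variables (n m : nat) (f : 'I_n -> lat n m -> lat n m) (T : nat).
Variables (G : nat -> lat n m) (S : nat -> {set 'I_n}) (view : nat -> 'I_n -> lat n m).
Hypothesis f_mono : forall i, monotone_fun (f i).
Hypothesis f_infl : forall i, inflationary (f i).
Hypothesis f_local : forall i, local i (f i).
Hypothesis G0 : G 0 = lat_bot n m.
Hypothesis stale : bounded_staleness T G S view.
Hypothesis step : execution_step f G S view.

Lemma execution_le_succ t : lat_le (G t) (G t.+1).
Proof.
move=> i; rewrite step; case: ifP => // i_active.
by have [<- _] := stale i_active; apply: f_infl.
Qed.

Lemma execution_mono : {homo G : s t / s <= t >-> lat_le s t}.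
Proof. exact: homo_leq (@lat_le_refl n m) (@lat_le_trans n m) execution_le_succ. Qed.

Lemma view_le_state t i : i \in S t -> lat_le (view t i) (G t).
Proof.
move=> i_active j; have [view_i view_j] := stale i_active.
have [->|ne_ji] := eqVneq j i; first by rewrite view_i.
by have [s [_ [le_st ->]]] := view_j j ne_ji; apply: execution_mono.
Qed.

Lemma execution_le_common_fixed_point H t :
  (forall i, f i H = H) -> lat_le (G t) H.
Proof.
move=> H_fixed; elim: t => [|t IHt] i; first by rewrite G0 ffunE.
rewrite step; case: ifP => [i_active|_]; last exact: IHt.
have <- : f i H i = H i by rewrite H_fixed.
apply: f_mono.
exact: lat_le_trans (view_le_state i_active) IHt.
Qed.

Lemma execution_eventually_constant : exists U, forall t, U <= t -> G t = G U.
Proof.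
have rank_mono : {homo (fun t => lat_rank (G t)) : s t / s <= t}.
  by move=> s t /execution_mono; apply: lat_rank_le.
have [U stable] := nondecreasing_bounded_eventually_constant rank_mono
  (fun t => lat_rank_bound (G t)).
exists U => t le_Ut; apply/esym/lat_le_rank_eq; first exact: execution_mono.
by rewrite stable.
Qed.

Section Stable.
Variable U : nat.
Hypothesis G_stable : forall t, U <= t -> G t = G U.

Lemma view_eq_stable_state t i : U + T <= t -> i \in S t -> view t i = G U.
Proof.
move=> le_t i_active; have [view_i view_j] := stale i_active.
apply/ffunP => j; have [->|ne_ji] := eqVneq j i.
  by rewrite view_i G_stable //; lia.
by have [s [le_s [_ ->]]] := view_j j ne_ji; rewrite G_stable //; lia.
Qed.

Lemma stable_state_fixed_point t i :
  U + T <= t -> i \in S t -> f i (G U) = G U.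
Proof.
move=> le_t i_active; apply/ffunP => j.
have [->|ne_ji] := eqVneq j i; last exact: f_local.
have := step t i; rewrite i_active view_eq_stable_state // G_stable //; lia.
Qed.

End Stable.
End Execution.

Theorem theorem4 (n m : nat) (f : 'I_n -> lat n m -> lat n m)
  (T tau : nat) (G : nat -> lat n m) (S : nat -> {set 'I_n})
  (view : nat -> 'I_n -> lat n m) :
  (forall i, monotone_fun (f i)) ->
  (forall i, inflationary (f i)) ->
  (forall i, local i (f i)) ->
  (1 <= tau)%N ->
  G 0 = lat_bot n m ->
  bounded_staleness T G S view ->
  execution_step f G S view ->
  strongly_fair tau S ->
  exists (U : nat) (Gstar : lat n m),
    (forall t, (U <= t)%N -> G t = Gstar) /\ least_common_fixed_point f Gstar.
Proof.
move=> f_mono f_infl f_local _ G0 stale step fair.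
have [U G_stable] := execution_eventually_constant f_infl stale step.
exists U, (G U); split=> //; split.
  move=> i; have [t [le_t [_ i_active]]] := fair i (U + T).
  exact (stable_state_fixed_point f_local stale step G_stable le_t i_active).
move=> H H_fixed.
exact (execution_le_common_fixed_point f_mono f_infl G0 stale step _ H_fixed).
Qed.
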